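(* Let $P$ be a finite rooted poset which is a frame for $\mathsf{wPL}$. Then $P\Vdash\mathcal{J}(Q_4)$ and $P\Vdash\mathcal{J}(Q_5)$ if and only if $P$ has stack-depth at most $1$.
   Context: $\mathsf{wPL}=\mathsf{IPC}\oplus (q\to p)\vee\big(((p\to q)\to p)\to p\big)$; its finite rooted frames are exactly the Boolean sums. The depth of a point $x$ in a finite poset is the largest $m$ such that there is a chain $x=x_1<\dots<x_m$ (maximal points have depth $1$). A finite rooted poset is a Boolean sum if (1) whenever $y$ is an immediate successor of $x$ then $d(x)=d(y)+1$, and (2) each point of depth $k+1$ lies below all points of depth $k$, for every $k$. For a Boolean sum of depth $m$ let $c_i$ be the number of points of depth $i$; a $k$-stack is a run of $k$ consecutive depths $i,i+1,\dots,i+k-1$ with $c_j>1$ for each of them; the stack-depth is the largest $k$ such that a $k$-stack exists (0 if none). For a finite rooted poset $Q$, the Yankov (Jankov) formula $\mathcal{J}(Q)$ has the property: for every finite poset $P$, $P\not\Vdash\mathcal{J}(Q)$ iff $Q$ is isomorphic to a rooted upset of a p-morphic image of $P$. $Q_4$ is the Boolean sum with layers of sizes $1,2,2$ from bottom to top: a root $r$, two points $a,b$ above $r$, and two maximal points $u,v$ each above both $a$ and $b$. $Q_5$ is $Q_4$ with an additional top point above $u$ and $v$. *)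

From mathcomp Require Import all_boot.
Set Implicit Arguments. Unset Strict Implicit. Unset Printing Implicit Defensive.

Record finPoset := FinPoset {
  carrier :> finType;
  le : rel carrier;
  le_refl : reflexive le;
  le_anti : antisymmetric le;
  le_trans : transitive le }.

Arguments le {_}.

Section Basics.
Variable P : finPoset.

Definition lt (x y : P) := le x y && (x != y).

Definition rooted := exists r : P, forall x : P, le r x.

(* x is the start of a strict chain x = x_1 < ... < x_m of m points *)
Definition has_chain (x : P) (m : nat) : bool :=
  [exists t : m.-1.-tuple P, path lt x t].

Definition depth_is (x : P) (m : nat) : bool :=
  [&& 0 < m, has_chain x m & ~~ has_chain x m.+1].

Definition cnt (i : nat) : nat := #|[set x : P | depth_is x i]|.

Definition has_stack (k : nat) : Prop :=
  exists i, 0 < i /\ forall j, i <= j < i + k -> 1 < cnt j.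

Definition stack_depth_le (n : nat) : Prop :=
  forall k, has_stack k -> k <= n.

(* Kripke validity of the wPL axiom (q -> p) \/ (((p -> q) -> p) -> p),
   valuations ranging over upsets. *)
Definition upset (U : P -> bool) := forall x y, le x y -> U x -> U y.

Definition frame_wPL : Prop :=
  forall (Up Uq : P -> bool), upset Up -> upset Uq ->
  forall x : P,
    (forall y, le x y -> Uq y -> Up y) \/
    (forall y, le x y ->
       (forall z, le y z ->
          (forall w, le z w -> Up w -> Uq w) -> Up z) -> Up y).
End Basics.

Definition pmorphism (P R : finPoset) (f : P -> R) : Prop :=
  (forall x y : P, le x y -> le (f x) (f y)) /\
  (forall (x : P) (y' : R), le (f x) y' -> exists2 y : P, le x y & f y = y').

Definition iso_rooted_upset (Q R : finPoset) : Prop :=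
  exists (r : R) (g : Q -> R),
    [/\ injective g,
        (forall a b : Q, le (g a) (g b) = le a b) &
        (forall y : R, le r y <-> exists q : Q, g q = y)].

(* P |= J(Q), via the defining property of the Jankov formula:
   P does not validate J(Q) iff Q is isomorphic to a rooted upset of a
   p-morphic image of P. *)
Definition validates_Jankov (P Q : finPoset) : Prop :=
  ~ exists (R : finPoset) (f : P -> R),
      [/\ pmorphism f, (forall y : R, exists x : P, f x = y) & iso_rooted_upset Q R].

(* Q4: 0 = root r, 1 = a, 2 = b, 3 = u, 4 = v *)
Definition leQ4 (x y : 'I_5) : bool :=
  [|| x == y, val x == 0 | (val x \in [:: 1; 2]) && (val y \in [:: 3; 4])].
(* Q5: Q4 plus 5 = top above u and v *)
Definition leQ5 (x y : 'I_6) : bool :=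
  [|| x == y, val x == 0, val y == 5 |
      (val x \in [:: 1; 2]) && (val y \in [:: 3; 4])].

Lemma leQ4_refl : reflexive leQ4.
Proof. by move=> x; rewrite /leQ4 eqxx. Qed.
Lemma leQ4_anti : antisymmetric leQ4.
Proof.
move=> x y /andP[].
case: x => [[|[|[|[|[|?]]]]] ?]; case: y => [[|[|[|[|[|?]]]]] ?] //= _ _; exact/val_inj.
Qed.
Lemma leQ4_trans : transitive leQ4.
Proof.
move=> y x z.
by case: x => [[|[|[|[|[|?]]]]] ?]; case: y => [[|[|[|[|[|?]]]]] ?];
  case: z => [[|[|[|[|[|?]]]]] ?].
Qed.
Definition Q4 : finPoset := FinPoset leQ4_refl leQ4_anti leQ4_trans.

Lemma leQ5_refl : reflexive leQ5.
Proof. by move=> x; rewrite /leQ5 eqxx. Qed.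
Lemma leQ5_anti : antisymmetric leQ5.
Proof.
move=> x y /andP[].
case: x => [[|[|[|[|[|[|?]]]]]] ?]; case: y => [[|[|[|[|[|[|?]]]]]] ?] //= _ _;
  exact/val_inj.
Qed.
Lemma leQ5_trans : transitive leQ5.
Proof.
move=> y x z.
by case: x => [[|[|[|[|[|[|?]]]]]] ?]; case: y => [[|[|[|[|[|[|?]]]]]] ?];
  case: z => [[|[|[|[|[|[|?]]]]]] ?].
Qed.
Definition Q5 : finPoset := FinPoset leQ5_refl leQ5_anti leQ5_trans.

From mathcomp Require Import all_boot zify.
Set Implicit Arguments. Unset Strict Implicit. Unset Printing Implicit Defensive.

(* In a rooted wPL frame the order is determined by depth: x <= y iff x = y or
   depth y < depth x.  So a p-morphic image in which two incomparable points u, v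
   have two distinct maximal common lower bounds a, b (as in Q4 and Q5) forces the
   preimages of u and v to share a depth n, and those of a and b can be pushed up
   to depth n + 1: a 2-stack.  Conversely a 2-stack at depths i, i + 1 collapses
   onto Q4 if i = 1 and onto Q5 if i > 1: deeper points go to the root, shallower
   ones to the top, and each of the two layers onto a pair of incomparable points. *)

Section Depth.
Variable P : finPoset.

Lemma lt_irr (x : P) : lt x x = false.
Proof. by rewrite /lt eqxx andbF. Qed.

Lemma lt_trans : transitive (@lt P).
Proof.
move=> y x z /andP[xy nxy] /andP[yz _]; rewrite /lt (le_trans xy yz) /=.
apply: contra nxy => /eqP exz; rewrite exz in xy *.
by rewrite eq_sym; apply/eqP/le_anti; rewrite xy yz.
Qed.

Lemma has_chainP (x : P) m :
  reflect (exists2 s : seq P, size s = m.-1 & path (@lt P) x s) (has_chain x m).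
Proof.
apply: (iffP existsP) => [[t xt]|[s sz xs]]; first by exists (val t); rewrite ?size_tuple.
by exists (Tuple (introT eqP sz)).
Qed.

Lemma has_chain_card (x : P) m : has_chain x m -> m <= #|P|.
Proof.
case/has_chainP=> s sz xs.
have /card_uniqP s_uniq : uniq (x :: s) by apply: (sorted_uniq lt_trans lt_irr).
by have := max_card (mem (x :: s)); rewrite s_uniq /= sz; lia.
Qed.

Lemma has_chain_small (x : P) m : m <= 1 -> has_chain x m.
Proof. by move=> m_le1; apply/has_chainP; exists [::]; case: m m_le1 => [|[]]. Qed.

Lemma has_chain_leq (x : P) m n : m <= n -> has_chain x n -> has_chain x m.
Proof.
case: m => [|m] le_mn; first by move=> _; apply: has_chain_small.
case/has_chainP=> s sz xs; apply/has_chainP; exists (take m s).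
  by rewrite size_take sz /=; case: ifP => //; lia.
by move: xs; rewrite -{1}(cat_take_drop m s) cat_path => /andP[].
Qed.

Lemma has_chain_cons (x y : P) m : lt x y -> has_chain y m -> has_chain x m.+1.
Proof.
case: m => [|m] xy; first by move=> _; apply: has_chain_small.
by case/has_chainP=> s sz ys; apply/has_chainP; exists (y :: s); rewrite /= ?sz ?xy.
Qed.

Lemma has_chain_uncons (x : P) m :
  has_chain x m.+2 -> exists2 y, lt x y & has_chain y m.+1.
Proof.
case/has_chainP=> [[|y s]] //= [sz] /andP[xy ys].
by exists y => //; apply/has_chainP; exists s.
Qed.

Definition depth (x : P) : nat :=
  ex_maxn (ex_intro _ 0 (has_chain_small x (leq0n 1))) (@has_chain_card x).

Lemma has_chainE (x : P) m : has_chain x m = (m <= depth x).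
Proof.
rewrite /depth; case: ex_maxnP => n xn n_max.
by apply/idP/idP => [/n_max | /has_chain_leq]; last apply.
Qed.

Lemma depth_isE (x : P) m : depth_is x m = (0 < m) && (m == depth x).
Proof. by rewrite /depth_is !has_chainE; case: (0 < m) => //=; apply/idP/idP; lia. Qed.

Lemma depth_gt0 (x : P) : 0 < depth x.
Proof. by rewrite -has_chainE has_chain_small. Qed.

Lemma depth_lt (x y : P) : le x y -> x != y -> depth y < depth x.
Proof.
move=> xy nxy; rewrite -has_chainE.
by apply: (@has_chain_cons x y); rewrite ?/lt ?xy ?has_chainE.
Qed.

Lemma depth_le (x y : P) : le x y -> depth y <= depth x.
Proof. by case: (eqVneq x y) => [-> | nxy xy]; last exact/ltnW/depth_lt. Qed.

Lemma exists_above_depth (x : P) k : 0 < k <= depth x -> exists2 y, le x y & depth y = k.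
Proof.
case/andP=> k_gt0; have [n] := ubnP (depth x); elim: n x => // n IH x /ltnSE dx_le.
rewrite leq_eqVlt => /predU1P[-> | k_lt]; first by exists x; rewrite ?le_refl.
have : has_chain x (depth x - 2).+2 by rewrite has_chainE; lia.
case/has_chain_uncons=> y /andP[xy nxy]; rewrite has_chainE => dy.
have [z yz dz] : exists2 z, le y z & depth z = k.
  by apply: IH; have := depth_lt xy nxy; lia.
by exists z; rewrite ?(le_trans xy yz).
Qed.

End Depth.

Section BooleanSum.
Variable P : finPoset.
Hypotheses (P_rooted : rooted P) (P_wPL : frame_wPL P).

(* Test wPL at the root with p := {u | depth u <= depth y, u != y} and q := the
   upset of y: the first disjunct fails at y, the second at z unless z <= y. *)
Lemma le_of_depth_succ (y z : P) : depth z = (depth y).+1 -> le z y.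
Proof.
move=> dz; apply/negPn/negP => nzy; have [r le_r] := P_rooted.
pose p u := (depth u <= depth y) && (u != y).
pose q u := le y u.
have p_up : upset p.
  move=> u u' uu' /andP[du nuy]; rewrite /p (leq_trans (depth_le uu') du) /=.
  by apply: contraTneq du => eu'; rewrite -ltnNge -eu' depth_lt // eu'.
have q_up : upset q by move=> u u' uu' yu; apply: le_trans yu uu'.
case: (P_wPL p_up q_up r) => [pq | peirce].
  by have := pq y (le_r y) (le_refl y); rewrite /p eqxx andbF.
have /negP[] : ~~ p z by rewrite /p dz ltnn.
apply: peirce (le_r z) _ => w zw pq_w.
case: (eqVneq z w) => [ezw | nzw]; last first.
  by rewrite /p -ltnS -dz depth_lt //=; apply: contraNneq nzy => <-.
subst w.
have [w' zw' dw'] : exists2 w', le z w' & depth w' = depth y.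
  by apply: exists_above_depth; rewrite dz depth_gt0 /=.
have nyw' : y != w' by apply: contraNneq nzy => ->.
have yw' : le y w' by apply: pq_w zw' _; rewrite /p dw' leqnn eq_sym.
by have := depth_lt yw' nyw'; rewrite dw' ltnn.
Qed.

Lemma le_of_depth_lt (x y : P) : depth y < depth x -> le x y.
Proof.
move=> dyx; have [z xz dz] : exists2 z, le x z & depth z = (depth y).+1.
  by apply: exists_above_depth; rewrite dyx.
exact: le_trans xz (le_of_depth_succ dz).
Qed.

Lemma le_depthE (x y : P) : le x y = (x == y) || (depth y < depth x).
Proof.
case: eqVneq => [-> | nxy] /=; first exact: le_refl.
by apply/idP/idP => [/depth_lt -> | /le_of_depth_lt].
Qed.
End BooleanSum.

Definition incomparable (Q : finPoset) (u v : Q) : bool := ~~ le u v && ~~ le v u.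

Definition max_lower_bound (Q : finPoset) (a u v : Q) : Prop :=
  [/\ le a u, le a v & forall c, le a c -> le c u -> le c v -> c = a].

Lemma cnt_gt1P (P : finPoset) n :
  reflect (exists x y : P, [/\ x != y, depth x = n & depth y = n]) (1 < cnt P n).
Proof.
apply: (iffP card_gt1P) => [[x [y []]] | [x [y [nxy dx dy]]]].
  rewrite !inE !depth_isE => /andP[_ /eqP ->] /andP[_ /eqP dy] nxy.
  by exists x, y; rewrite dy.
by exists x, y; rewrite !inE !depth_isE dx dy eqxx nxy -dx depth_gt0.
Qed.

Lemma has_stack_leq (P : finPoset) j k : j <= k -> has_stack P k -> has_stack P j.
Proof.
move=> jk [i [i_gt0 stack]]; exists i; split=> // l /andP[il lj].
by apply: stack; rewrite il (leq_trans lj) ?leq_add2l.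
Qed.

Section Images.
Variables (P R : finPoset) (f : P -> R).
Hypotheses (P_rooted : rooted P) (P_wPL : frame_wPL P).
Hypotheses (f_pmorphism : pmorphism f) (f_onto : forall q, exists x, f x = q).

Lemma depth_eq_of_incomparable_images (x y : P) :
  incomparable (f x) (f y) -> depth x = depth y.
Proof.
case: f_pmorphism => f_mono _ /andP[nxy nyx].
case: (ltngtP (depth x) (depth y)) => // [dxy | dyx].
  by move: nyx; rewrite f_mono // le_of_depth_lt.
by move: nxy; rewrite f_mono // le_of_depth_lt.
Qed.

Lemma depth_gt_of_image_lt (x : P) (u : R) n :
  le (f x) u -> ~~ le u (f x) -> (forall y, f y = u -> depth y = n) -> n < depth x.
Proof.
case: f_pmorphism => _ f_back xu nux du; have [y xy fy] := f_back x u xu.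
rewrite -(du y fy) depth_lt //; apply: contraNneq nux => exy.
by rewrite -fy -exy le_refl.
Qed.

Lemma has_stack2_of_image (a b u v : R) :
  incomparable u v -> a != b -> max_lower_bound a u v -> max_lower_bound b u v ->
  has_stack P 2.
Proof.
move=> uv nab mlb_a mlb_b; have [xu fxu] := f_onto u; have [xv fxv] := f_onto v.
have dxv : depth xu = depth xv by apply: depth_eq_of_incomparable_images; rewrite fxu fxv.
have du y : f y = u -> depth y = depth xu.
  by move=> fy; rewrite dxv; apply: depth_eq_of_incomparable_images; rewrite fy fxv.
have below c : max_lower_bound c u v -> exists2 z, depth z = (depth xu).+1 & f z = c.
  case=> cu cv c_max; have [y fy] := f_onto c.
  have nuc : ~~ le u c by apply: contra (proj1 (andP uv)) => /le_trans; apply.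
  have dy : depth xu < depth y by apply: (@depth_gt_of_image_lt y u); rewrite ?fy.
  have [|z yz dz] := @exists_above_depth _ y (depth xu).+1; first by rewrite dy.
  exists z => //; case: f_pmorphism => f_mono _.
  by apply: c_max; rewrite -?fy -?fxu -?fxv f_mono // le_of_depth_lt ?dz -?dxv.
have [[za dza fza] [zb dzb fzb]] := (below a mlb_a, below b mlb_b).
exists (depth xu); split=> [|j]; first exact: depth_gt0.
move=> j_range; have [-> | ->] : j = depth xu \/ j = (depth xu).+1 by lia.
  apply/cnt_gt1P; exists xu, xv; split; rewrite -?dxv //.
  by apply: contraTneq uv => exuv; rewrite -fxu -fxv exuv /incomparable le_refl.
apply/cnt_gt1P; exists za, zb; split=> //.
by apply: contraNneq nab => ezab; rewrite -fza -fzb ezab.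
Qed.
End Images.

Lemma validates_Jankov_of_pattern (P Q : finPoset) (a b u v : Q) :
  rooted P -> frame_wPL P -> incomparable u v -> a != b ->
  max_lower_bound a u v -> max_lower_bound b u v ->
  stack_depth_le P 1 -> validates_Jankov P Q.
Proof.
move=> P_rooted P_wPL uv nab mlb_a mlb_b P_stack.
move=> [R [f [f_pm f_onto [r [g [g_inj g_le g_onto]]]]]].
have g_mlb c : max_lower_bound c u v -> max_lower_bound (g c) (g u) (g v).
  case=> cu cv c_max; split; rewrite ?g_le // => e gce eu ev.
  have r_gc : le r (g c) by apply/g_onto; exists c.
  have [e' ge'] := (g_onto e).1 (le_trans r_gc gce); subst e.
  by rewrite (c_max e') // -g_le.
have g_uv : incomparable (g u) (g v) by rewrite /incomparable !g_le.
have g_ab : g a != g b by rewrite (inj_eq g_inj).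
have := has_stack2_of_image P_rooted P_wPL f_pm f_onto g_uv g_ab
  (g_mlb a mlb_a) (g_mlb b mlb_b).
by move/P_stack.
Qed.

Lemma Jankov_refuted (P Q : finPoset) (q0 : Q) (f : P -> Q) :
  (forall q, le q0 q) -> pmorphism f -> (forall q, exists x, f x = q) ->
  ~ validates_Jankov P Q.
Proof.
move=> q0_root f_pm f_onto; apply; exists Q, f; split=> //.
by exists q0, id; split=> // q; split=> _; [exists q | apply: q0_root].
Qed.

Section Layers.
Variable P : finPoset.
Hypotheses (P_rooted : rooted P) (P_wPL : frame_wPL P).

Lemma pmorphism_of_layers (R : finPoset) (f : P -> R) (rk : R -> nat) (h : nat -> nat) :
  (forall a b : R, a != b -> le a b = (rk b < rk a)) -> {homo h : m n / m <= n} ->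
  (forall x, rk (f x) = h (depth x)) ->
  (forall x y, depth y < depth x -> h (depth y) = h (depth x) -> f x = f y) ->
  (forall q, exists x, f x = q) -> pmorphism f.
Proof.
move=> R_rank h_mono f_rank f_layer f_onto; split=> [x y | x q].
  rewrite (le_depthE P_rooted P_wPL) => /predU1P[-> | dyx]; first exact: le_refl.
  case: (eqVneq (f x) (f y)) => [-> | nf]; first exact: le_refl.
  have hyx : h (depth y) <= h (depth x) := h_mono _ _ (ltnW dyx).
  rewrite R_rank // !f_rank ltn_neqAle hyx andbT.
  by apply: contra nf => /eqP /(f_layer _ _ dyx) ->.
case: (eqVneq (f x) q) => [<- _ | nxq]; first by exists x; first exact: le_refl.
rewrite R_rank // => rq; have [y fy] := f_onto q; exists y => //.
apply: (le_of_depth_lt P_rooted P_wPL); rewrite ltnNge; apply: contraL rq => /h_mono.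
by rewrite -fy !f_rank -leqNgt.
Qed.
End Layers.

(* Points 0..5 of Q4 and Q5 ranked by height from the top; the top 5 of Q5 gets
   rank 0 as the default of nth. *)
Definition code_rank (c : nat) : nat := nth 0 [:: 3; 2; 2; 1; 1] c.

Lemma leQ4_rank (a b : Q4) : a != b -> le a b = (code_rank b < code_rank a).
Proof. by case: a => [[|[|[|[|[|?]]]]] ?]; case: b => [[|[|[|[|[|?]]]]] ?]. Qed.

Lemma leQ5_rank (a b : Q5) : a != b -> le a b = (code_rank b < code_rank a).
Proof.
by case: a => [[|[|[|[|[|[|?]]]]]] ?]; case: b => [[|[|[|[|[|[|?]]]]]] ?].
Qed.

Section Collapse.
Variables (P : finPoset) (i : nat) (u0 u1 a0 a1 : P).
Hypotheses (P_rooted : rooted P) (P_wPL : frame_wPL P).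
Hypotheses (nu : u0 != u1) (na : a0 != a1).
Hypotheses (du0 : depth u0 = i) (du1 : depth u1 = i).
Hypotheses (da0 : depth a0 = i.+1) (da1 : depth a1 = i.+1).

Definition collapse (x : P) : nat :=
  if depth x < i then 5 else if i.+1 < depth x then 0
  else if depth x == i.+1 then (if x == a0 then 1 else 2)
  else if x == u0 then 3 else 4.

Definition layer_rank (n : nat) : nat := if n < i then 0 else minn (n - i).+1 3.

Lemma code_rank_collapse x : code_rank (collapse x) = layer_rank (depth x).
Proof.
rewrite /collapse /layer_rank; case: ltnP => // di; case: ltnP => di1.
  by rewrite /code_rank /=; lia.
by case: eqP => di2; case: eqP => _; rewrite /code_rank /=; lia.
Qed.

Lemma collapse_layer x y :
  depth y < depth x -> layer_rank (depth y) = layer_rank (depth x) ->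
  collapse x = collapse y.
Proof.
rewrite /collapse /layer_rank => dyx.
case: (ltnP (depth y) i) => dyi; case: (ltnP (depth x) i) => dxi //; try lia.
by move=> e; have [-> ->] : (i.+1 < depth y) /\ (i.+1 < depth x) by lia.
Qed.

Lemma collapse_refutes (R : finPoset) (r0 : R) (g : nat -> R) (rk : R -> nat) :
  (forall q, le r0 q) -> (forall a b : R, a != b -> le a b = (rk b < rk a)) ->
  (forall x, rk (g (collapse x)) = code_rank (collapse x)) ->
  (forall q, exists x, g (collapse x) = q) -> ~ validates_Jankov P R.
Proof.
move=> r0_root R_rank g_rank g_onto; apply: (Jankov_refuted (f := g \o collapse)) => //.
apply: (pmorphism_of_layers (h := layer_rank) P_rooted P_wPL R_rank) => //.
- by move=> m n mn; rewrite /layer_rank; case: (ltnP m i); case: (ltnP n i) => //; lia.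
- by move=> x; rewrite /= g_rank code_rank_collapse.
- by move=> x y dyx /(collapse_layer dyx) /= ->.
Qed.

Lemma collapse_depth_i x : depth x = i -> collapse x = if x == u0 then 3 else 4.
Proof. by rewrite /collapse => ->; rewrite ltnn ltnNge leqnSn (ltn_eqF (ltnSn i)). Qed.

Lemma collapse_depth_i1 x : depth x = i.+1 -> collapse x = if x == a0 then 1 else 2.
Proof. by rewrite /collapse => ->; rewrite ltnn ltnNge leqnSn eqxx. Qed.

Lemma collapse_onto c : c < 5 -> exists x, collapse x = c.
Proof.
have [r le_r] := P_rooted.
have dr : i.+1 < depth r.
  have [ra0 | nra0] := eqVneq r a0; last by rewrite -da0 depth_lt.
  by rewrite -da1 (depth_lt (le_r a1)) // ra0.
case: c => [|[|[|[|[|]]]]] // _.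
- by exists r; rewrite /collapse dr; case: ltnP => //; lia.
- by exists a0; rewrite collapse_depth_i1 ?eqxx.
- by exists a1; rewrite collapse_depth_i1 // eq_sym (negbTE na).
- by exists u0; rewrite collapse_depth_i ?eqxx.
- by exists u1; rewrite collapse_depth_i // eq_sym (negbTE nu).
Qed.

Lemma collapse_onto_top : 1 < i -> exists x, collapse x = 5.
Proof.
move=> i_gt1; have [|x _ dx] := @exists_above_depth _ u0 1.
  by rewrite du0 (ltnW i_gt1).
by exists x; rewrite /collapse dx i_gt1.
Qed.

Lemma collapse_refutes_Q4 : i = 1 -> ~ validates_Jankov P Q4.
Proof.
move=> i1; have collapse_lt5 x : collapse x < 5.
  by rewrite /collapse i1 (ltnNge (depth x)) depth_gt0 /=; do !case: ifP.
apply: (collapse_refutes (R := Q4) (r0 := ord0) (g := @inord 4)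
  (rk := fun a : Q4 => code_rank a)).
- by case=> [[|[|[|[|[|?]]]]] ?].
- exact: leQ4_rank.
- by move=> x; rewrite inordK.
- by move=> q; have [x cx] := collapse_onto (ltn_ord q); exists x; rewrite cx inord_val.
Qed.

Lemma collapse_refutes_Q5 : 1 < i -> ~ validates_Jankov P Q5.
Proof.
move=> i_gt1; have collapse_lt6 x : collapse x < 6 by rewrite /collapse; do !case: ifP.
apply: (collapse_refutes (R := Q5) (r0 := ord0) (g := @inord 5)
  (rk := fun a : Q5 => code_rank a)).
- by case=> [[|[|[|[|[|[|?]]]]]] ?].
- exact: leQ5_rank.
- by move=> x; rewrite inordK.
move=> q; have [x cx] : exists x, collapse x = q.
  have := ltn_ord q; rewrite ltnS leq_eqVlt => /predU1P[-> | /collapse_onto //].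
  exact: collapse_onto_top.
by exists x; rewrite cx inord_val.
Qed.
End Collapse.

Lemma stack2_refutes_Jankov (P : finPoset) :
  rooted P -> frame_wPL P -> has_stack P 2 ->
  ~ (validates_Jankov P Q4 /\ validates_Jankov P Q5).
Proof.
move=> P_rooted P_wPL [i [i_gt0 stack]] [V4 V5].
have /cnt_gt1P [u0 [u1 [nu du0 du1]]] : 1 < cnt P i by apply: stack; lia.
have /cnt_gt1P [a0 [a1 [na da0 da1]]] : 1 < cnt P i.+1 by apply: stack; lia.
have [i1 | i_gt1] : i = 1 \/ 1 < i by lia.
  exact: (collapse_refutes_Q4 P_rooted P_wPL nu na du0 du1 da0 da1).
exact: (collapse_refutes_Q5 P_rooted P_wPL nu na du0 du1 da0 da1).
Qed.

Theorem mainTheorem5 (P : finPoset) :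
  rooted P -> frame_wPL P ->
  (validates_Jankov P Q4 /\ validates_Jankov P Q5 <-> stack_depth_le P 1).
Proof.
move=> P_rooted P_wPL; split=> [V45 k stack_k | P_stack].
  rewrite leqNgt; apply/negP => k_gt1.
  exact: (stack2_refutes_Jankov P_rooted P_wPL (has_stack_leq k_gt1 stack_k) V45).
split.
  apply: (@validates_Jankov_of_pattern P Q4
    (@Ordinal 5 1 isT) (@Ordinal 5 2 isT) (@Ordinal 5 3 isT) (@Ordinal 5 4 isT)) => //.
    by split=> // -[[|[|[|[|[|?]]]]] ?] //= *; apply/val_inj.
  by split=> // -[[|[|[|[|[|?]]]]] ?] //= *; apply/val_inj.
apply: (@validates_Jankov_of_pattern P Q5
  (@Ordinal 6 1 isT) (@Ordinal 6 2 isT) (@Ordinal 6 3 isT) (@Ordinal 6 4 isT)) => //.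
  by split=> // -[[|[|[|[|[|[|?]]]]]] ?] //= *; apply/val_inj.
by split=> // -[[|[|[|[|[|[|?]]]]]] ?] //= *; apply/val_inj.
Qed.
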